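(* Let $w \in S_n$ with Lehmer code $L(w) = (L_1,\dots,L_n)$. If there is an index $i$ with $L_i - L_{i+1} \ge 2$, then the Schubert polynomial $\mathfrak{S}_w$ is not a standard elementary monomial.
   Context: The Lehmer code of $w$ is given by $L_i = |\{j > i : w(j) < w(i)\}|$. $e^i_j$ is the elementary symmetric polynomial of degree $j$ in $x_1,\dots,x_i$; a standard elementary monomial is a product $e^1_{a_1}e^2_{a_2}\cdots$ with nonnegative integers $a_i$, finitely many nonzero. Schubert polynomials: $\mathfrak{S}_{w_0} = x_1^{n-1}\cdots x_{n-1}$ for the longest $w_0 \in S_n$, and $\partial_i\mathfrak{S}_w = \mathfrak{S}_{ws_i}$ if $\ell(ws_i)=\ell(w)-1$, $0$ otherwise, where $\partial_i f = (f-s_if)/(x_i-x_{i+1})$. *)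

From HB Require Import structures.
From mathcomp Require Import all_boot all_order all_algebra all_fingroup.
From mathcomp Require Import mpoly.
Set Implicit Arguments. Unset Strict Implicit. Unset Printing Implicit Defensive.
Import GRing.Theory.
Local Open Scope ring_scope.

(* Variables x_1..x_n are 'X_0 .. 'X_(n-1) (0-indexed). Coefficients in int. *)

Definition lehmer n (w : 'S_n) (i : 'I_n) : nat :=
  #|[set j : 'I_n | (i < j)%N && (w j < w i)%N]|.

Definition perm_length n (w : 'S_n) : nat :=
  #|[set p : 'I_n * 'I_n | (p.1 < p.2)%N && (w p.2 < w p.1)%N]|.

Definition simple_tr n (i : nat) (hi : (i.+1 < n)%N) : 'S_n :=
  tperm (Ordinal (ltnW hi)) (Ordinal hi).

(* composition w s_i as functions: x |-> w (s_i x); in MathComp's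
   perm group, (s * t) x = t (s x), so this is s_i * w. *)
Definition mul_s n (w : 'S_n) (i : nat) (hi : (i.+1 < n)%N) : 'S_n :=
  (simple_tr hi * w)%g.

Definition w0 n : 'S_n := perm (@rev_ord_inj n).

Definition stair_mono n : {mpoly int[n]} :=
  \prod_(i < n) 'X_i ^+ (n.-1 - i).

(* Schubert polynomials: a family S_w (w in S_n) with S_{w0} = x^delta and
   d_i S_w = S_{w s_i} if l(w s_i) = l(w) - 1, and 0 otherwise, where
   d_i f = (f - s_i f)/(x_i - x_{i+1}).  The division is expressed by the
   (unique, since {mpoly int[n]} is a domain) equation
   (x_i - x_{i+1}) * d_i f = f - s_i f.  Such a family exists and is unique. *)
Definition is_schubert_family n (S : 'S_n -> {mpoly int[n]}) : Prop :=
  S (w0 n) = stair_mono n /\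
  forall (w : 'S_n) (i : nat) (hi : (i.+1 < n)%N),
    ('X_(Ordinal (ltnW hi)) - 'X_(Ordinal hi)) *
      (if (perm_length (mul_s w hi)).+1 == perm_length w
       then S (mul_s w hi) else 0)
    = S w - msym (simple_tr hi) (S w).

Definition elem_sym n (i j : nat) : {mpoly int[n]} :=
  \sum_(h : {set 'I_n} | (#|h| == j) && [forall k in h, (k < i)%N])
     \prod_(k in h) 'X_k.

Definition is_std_elem_monomial n (p : {mpoly int[n]}) : Prop :=
  exists a : 'I_n -> nat, p = \prod_(k < n) elem_sym n k.+1 (a k).

From HB Require Import structures.
From mathcomp Require Import all_boot all_order all_algebra all_fingroup.
From mathcomp Require Import mpoly.
From mathcomp Require Import zify ring.
Set Implicit Arguments. Unset Strict Implicit. Unset Printing Implicit Defensive.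
Import GRing.Theory Num.Theory.

(* Write S_w = e^1_{a_1} ... e^n_{a_n}.  If j is a descent of w and a_{j-1} = 0, then
   e^j_{m+1} = e^{j-1}_{m+1} + x_j e^{j-1}_m and the s_j-symmetry of the other factors show
   that the divided difference at j replaces e^{j-1}_0 e^j_{m+1} by e^{j-1}_m e^j_0, so
   S_{w s_j} is again a standard elementary monomial.  Such moves carry
   S_{w0} = e^1_1 ... e^{n-1}_{n-1} down to S_1 = 1; hence no Schubert polynomial vanishes,
   and a_j > 0 at each descent j, a_j = 0 at each ascent j.
   L_i - L_{i+1} >= 2 means that w(i) > w(l) > w(i+1) for some l > i+1.  Such a pattern
   survives a move to a shorter permutation: at the first descent j of w if j < i; at i if
   i+1 is a descent too (the pattern shifts to i+1); at the first descent after i+1 if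
   w(i+2) > w(i).  In the remaining case w(i+1) < w(i+2) < w(i), the move at i keeps a_{i+1}
   but creates a descent at i+1, so a_{i+1} would be both zero and positive. *)

Definition swapn (j p : nat) : nat :=
  if p == j then j.+1 else if p == j.+1 then j else p.

Variant swapn_spec (j p : nat) : nat -> Type :=
  | SwapnFirst of p = j : swapn_spec j p j.+1
  | SwapnSecond of p = j.+1 : swapn_spec j p j
  | SwapnOther of p <> j & p <> j.+1 : swapn_spec j p p.

Lemma swapnP j p : swapn_spec j p (swapn j p).
Proof.
rewrite /swapn; have [pj|pj] := eqVneq p j; first exact: SwapnFirst.
have [pj1|pj1] := eqVneq p j.+1; first exact: SwapnSecond.
by apply: SwapnOther; apply/eqP.
Qed.

Lemma swapn_first j : swapn j j = j.+1.
Proof. by case: swapnP; lia. Qed.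

Lemma swapn_second j : swapn j j.+1 = j.
Proof. by case: swapnP; lia. Qed.

Lemma swapn_id j p : p <> j -> p <> j.+1 -> swapn j p = p.
Proof. by case: swapnP. Qed.

Lemma swapnK j : involutive (swapn j).
Proof. by move=> p; case: (swapnP j p) => [->|->|]; case: swapnP; lia. Qed.

(* [w s_j s_(j-1) ... s_0] maps [p] to [w (cycn j p)]. *)
Definition cycn (j p : nat) : nat := if p == 0 then j.+1 else if p <= j.+1 then p.-1 else p.

Variant cycn_spec (j p : nat) : nat -> Type :=
  | CycnFirst of p = 0 : cycn_spec j p j.+1
  | CycnShift of 0 < p <= j.+1 : cycn_spec j p p.-1
  | CycnOther of j.+1 < p : cycn_spec j p p.

Lemma cycnP j p : cycn_spec j p (cycn j p).
Proof.
rewrite /cycn; case: (posnP p) => [p0|p0]; first exact: CycnFirst.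
by case: leqP => pj; [apply: CycnShift; rewrite p0 | apply: CycnOther].
Qed.

Lemma swapn_cycn j p : swapn j.+1 (cycn j p) = cycn j.+1 p.
Proof. by case: (cycnP j p); case: (cycnP j.+1 p); case: swapnP; lia. Qed.

Lemma cycn0 p : cycn 0 p = swapn 0 p.
Proof. by case: cycnP; case: swapnP; lia. Qed.

Section PermNat.
Variable n : nat.
Implicit Types (w : 'S_n) (j p q : nat).

(* Outside [0, n) the junk value is n, above every genuine value, so that a descent or a
   pattern below can only occur at positions in range. *)
Definition permn w p : nat := oapp (fun o : 'I_n => val (w o)) n (insub p).

Lemma permnE w p (hp : p < n) : permn w p = w (Ordinal hp).
Proof. by rewrite /permn insubT. Qed.

Lemma permn_ord w (o : 'I_n) : permn w o = w o.
Proof. by rewrite /permn valK. Qed.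

Lemma permn_out w p : n <= p -> permn w p = n.
Proof. by rewrite /permn leqNgt => /negbTE np; rewrite insubF. Qed.

Lemma permn_lt w p : (permn w p < n) = (p < n).
Proof.
case: (ltnP p n) => hp; first by rewrite (permnE w hp) ltn_ord.
by rewrite permn_out // ltnn.
Qed.

Lemma permn_le w p : permn w p <= n.
Proof. by case: (ltnP p n) => hp; [rewrite ltnW ?permn_lt | rewrite permn_out]. Qed.

Lemma permn_inj w p q : p < n -> q < n -> permn w p = permn w q -> p = q.
Proof.
move=> hp hq; rewrite (permnE w hp) (permnE w hq) => /val_inj /perm_inj.
by move/(congr1 val).
Qed.

Lemma simple_trE j (hj : j.+1 < n) (x : 'I_n) : val (simple_tr hj x) = swapn j x.
Proof.
rewrite /simple_tr; case: tpermP => [->|->|/eqP + /eqP]; rewrite -?val_eqE /=;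
  by case: swapnP; lia.
Qed.

Lemma simple_trK j (hj : j.+1 < n) : involutive (simple_tr hj).
Proof. exact: tpermK. Qed.

Lemma permn_mul_s w j (hj : j.+1 < n) p : permn (mul_s w hj) p = permn w (swapn j p).
Proof.
case: (ltnP p n) => hp; last first.
  by rewrite !permn_out //; case: swapnP; lia.
by rewrite (permnE _ hp) /mul_s permM -permn_ord simple_trE.
Qed.

Lemma mul_sK w j (hj : j.+1 < n) : mul_s (mul_s w hj) hj = w.
Proof. by rewrite /mul_s mulgA /simple_tr tperm2 mul1g. Qed.

Definition descent w j : bool := permn w j.+1 < permn w j.

Lemma descent_lt w j : descent w j -> j.+1 < n.
Proof. by move=> d; rewrite -(permn_lt w); apply: leq_trans d (permn_le w j). Qed.

Lemma descentN_lt w j : j.+1 < n -> ~~ descent w j -> permn w j < permn w j.+1.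
Proof.
move=> hj; rewrite /descent -leqNgt leq_eqVlt => /orP [/eqP /permn_inj e|//].
by have := e (ltnW hj) hj; lia.
Qed.

Lemma no_descent_increasing w lo hi : hi < n -> lo <= hi ->
  (forall j, lo <= j < hi -> ~~ descent w j) -> permn w lo + (hi - lo) <= permn w hi.
Proof.
elim: hi => [|hi IH] hn lh asc; first by rewrite (_ : lo = 0) ?addn0; lia.
case: (leqP lo hi) => [le_lo_hi|lt_hi_lo]; last by rewrite (_ : lo = hi.+1) ?subnn ?addn0; lia.
have asc' j : lo <= j < hi -> ~~ descent w j.
  by case/andP=> lj jh; apply: asc; rewrite lj ltnW.
have asc_hi : ~~ descent w hi by apply: asc; rewrite le_lo_hi ltnSn.
by have := IH (ltnW hn) le_lo_hi asc'; have := descentN_lt hn asc_hi; lia.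
Qed.

Lemma descent_between w lo hi : lo <= hi -> hi < n ->
  permn w hi < permn w lo -> exists2 j, lo <= j < hi & descent w j.
Proof.
move=> lh hn whl.
have [/existsP [j /andP [lj dj]]|nd] := boolP [exists j : 'I_hi, (lo <= j) && descent w j].
  by exists j; rewrite ?lj ?ltn_ord.
suff : permn w lo + (hi - lo) <= permn w hi by lia.
apply: no_descent_increasing => // j /andP [lj jh]; apply: contra nd => dj.
by apply/existsP; exists (Ordinal jh); rewrite lj.
Qed.

Lemma perm_eq1_or_descent w : w = 1%g \/ exists j, descent w j.
Proof.
have [/existsP [j dj]|nd] := boolP [exists j : 'I_n, descent w j]; first by right; exists j.
have asc j : ~~ descent w j.
  by apply: contra nd => dj; apply/existsP; exists (Ordinal (ltnW (descent_lt dj))).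
left; apply/permP => x; rewrite perm1; apply: val_inj => /=; rewrite -permn_ord.
have hx := ltn_ord x; have hn : n.-1 < n by lia.
have := no_descent_increasing (lo := 0) hx (leq0n x) (fun j _ => asc j).
have := no_descent_increasing (lo := x) hn (_ : x <= n.-1) (fun j _ => asc j).
by have := permn_lt w n.-1; rewrite hn; lia.
Qed.

Lemma perm_length_descent w j (hj : j.+1 < n) : descent w j ->
  (perm_length (mul_s w hj)).+1 = perm_length w.
Proof.
rewrite /descent (permnE w hj) (permnE w (ltnW hj)) => dj; rewrite /perm_length.
pose phi (p : 'I_n * 'I_n) := (simple_tr hj p.1, simple_tr hj p.2).
have phiK : involutive phi by move=> [a b]; rewrite /phi !simple_trK.
rewrite -(card_imset _ (can_inj phiK)) (can2_imset_pre _ phiK phiK).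
set p0 : 'I_n * 'I_n := (Ordinal (ltnW hj), Ordinal hj).
rewrite [RHS](cardsD1 p0) inE /= ltnSn dj add1n; congr _.+1.
apply: eq_card => -[a b]; rewrite !inE /phi /mul_s !permM !simple_trK !simple_trE.
rewrite -[(a, b).1]/a -[(a, b).2]/b.
case wab: (w b < w a); last by rewrite !andbF.
rewrite !andbT xpair_eqE -!val_eqE /=.
have not_swapped : ~ (a = j.+1 :> nat /\ b = j :> nat).
  move=> [ea eb]; have ea' : a = Ordinal hj by exact: val_inj.
  have eb' : b = Ordinal (ltnW hj) by exact: val_inj.
  by move: wab dj; rewrite ea' eb'; lia.
by case: (swapnP j a) => *; case: (swapnP j b) => *; apply/idP/idP; lia.
Qed.

Lemma perm_length_ascent w j (hj : j.+1 < n) : permn w j < permn w j.+1 ->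
  perm_length (mul_s w hj) = (perm_length w).+1.
Proof.
move=> aj; rewrite -[in RHS](mul_sK w hj) perm_length_descent //.
by rewrite /descent !permn_mul_s; do 2!case: swapnP; lia.
Qed.

End PermNat.

Section Pattern312.
Variable n : nat.
Implicit Types (w : 'S_n) (i j : nat).

Definition pattern312 w i :=
  exists2 l, i.+1 < l & permn w i.+1 < permn w l < permn w i.

Lemma pattern312_mul_lt w i j (hj : j.+1 < n) : j < i -> descent w j ->
  pattern312 w i -> pattern312 (mul_s w hj) i.
Proof.
rewrite /descent => ji dj [l il wl]; exists l => //.
rewrite !permn_mul_s (@swapn_id j i.+1) ?(@swapn_id j l); try lia.
by case: (swapnP j i) => [|ij|]; [lia | move: wl; rewrite ij; lia | ].
Qed.

Lemma pattern312_mul_ge w i j (hj : j.+1 < n) : i.+2 <= j ->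
  pattern312 w i -> pattern312 (mul_s w hj) i.
Proof.
move=> ij [l il wl]; exists (swapn j l); first by case: swapnP; lia.
by rewrite !permn_mul_s swapnK (@swapn_id j i) ?(@swapn_id j i.+1); lia.
Qed.

Lemma pattern312_mul_at w i (hi : i.+1 < n) : descent w i.+1 ->
  pattern312 w i -> pattern312 (mul_s w hi) i.+1.
Proof.
rewrite /descent => di1 [l il /andP [wl1 wl2]].
have il2 : i.+2 < l by rewrite ltn_neqAle il andbT; apply/eqP => el; move: di1; rewrite el; lia.
exists l => //; rewrite !permn_mul_s swapn_second !swapn_id; lia.
Qed.

Lemma lehmer_pattern312 w i (hi : i.+1 < n) :
  lehmer w (Ordinal hi) + 2 <= lehmer w (Ordinal (ltnW hi)) -> pattern312 w i.
Proof.
move=> hL.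
have [/existsP [l /andP [il wl]]|/existsPn no_pat] :=
  boolP [exists l : 'I_n, (i.+1 < l) && (permn w i.+1 < permn w l < permn w i)].
  by exists l.
suff sub : [set j : 'I_n | (Ordinal (ltnW hi) < j) && (w j < w (Ordinal (ltnW hi)))]
    \subset Ordinal hi |: [set j : 'I_n | (Ordinal hi < j) && (w j < w (Ordinal hi))].
  by move: hL; rewrite /lehmer; have := subset_leq_card sub; rewrite cardsU1; lia.
apply/subsetP => j; rewrite !inE -val_eqE /= -!permn_ord /= => /andP [ij wj].
have := no_pat j; case: (eqVneq (j : nat) i.+1) => //= ji1.
have := @permn_inj _ w j i.+1 (ltn_ord j) hi; lia.
Qed.

End Pattern312.

Section OrdinalSets.
Variable n : nat.

Lemma card_ord_lt L : #|[set k : 'I_n | k < L]| = minn L n.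
Proof.
case: (leqP L n) => [Ln|nL].
  rewrite -sum1dep_card -(big_ord_widen _ (fun _ => 1)) //.
  by rewrite sum1_card card_ord.
rewrite -[RHS]card_ord -cardsT; apply: eq_card => k.
by rewrite !inE (ltn_trans (ltn_ord k) nL).
Qed.

Lemma card_ord_range lo hi : hi <= n -> #|[set k : 'I_n | lo <= k < hi]| = hi - lo.
Proof.
move=> hn; have := cardsID [set k : 'I_n | k < lo] [set k : 'I_n | k < hi].
have -> : [set k : 'I_n | k < hi] :&: [set k : 'I_n | k < lo]
    = [set k : 'I_n | k < minn lo hi] by apply/setP => k; rewrite !inE; lia.
have -> : [set k : 'I_n | k < hi] :\: [set k : 'I_n | k < lo]
    = [set k : 'I_n | lo <= k < hi].
  by apply/setP => k; rewrite !inE; lia.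
by rewrite !card_ord_lt; lia.
Qed.

End OrdinalSets.

Section ElemSym.
Variable n : nat.
Local Open Scope ring_scope.
Implicit Types (L m : nat).

Lemma msymXU (s : 'S_n) (k : 'I_n) : msym s ('X_k : {mpoly int[n]}) = 'X_(s k).
Proof.
rewrite /msym mmapX /mmap1 (bigD1 k) //= mnm1E eqxx expr1 big1 ?mulr1 //.
by move=> x /negbTE nx; rewrite mnm1E eq_sym nx expr0.
Qed.

Lemma subX_neq0 (j k : 'I_n) : j != k -> ('X_j - 'X_k : {mpoly int[n]}) != 0.
Proof.
move=> jk; rewrite subr_eq0; apply: contra jk => /eqP /(congr1 (mcoeff U_(j))).
by rewrite !mcoeffXU eqxx eq_sym; case: eqP => // _ /eqP; rewrite oner_eq0.
Qed.

Lemma elem_sym0 L : elem_sym n L 0 = 1.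
Proof.
rewrite /elem_sym (big_pred1 set0) ?big_set0 // => h /=.
rewrite cards_eq0; case: eqP => [->|] //=.
by apply/forallP => x; rewrite inE.
Qed.

Lemma elem_sym_eq0 L m : (L < m)%N -> elem_sym n L m = 0.
Proof.
move=> Lm; rewrite /elem_sym big1 // => h /andP [/eqP hm /forall_inP hL].
have /subset_leq_card : h \subset [set k : 'I_n | (k < L)%N].
  by apply/subsetP => k /hL; rewrite inE.
by rewrite hm card_ord_lt; lia.
Qed.

Lemma elem_sym_neq0 L m : (m <= L)%N -> (L <= n)%N -> elem_sym n L m != 0.
Proof.
move=> mL Ln; apply/negP => /eqP /(congr1 (meval (fun _ => 1))).
rewrite meval0 /elem_sym rmorph_sum /=.
have eval1 (h : {set 'I_n}) :
    meval (fun _ => 1) (\prod_(k in h) ('X_k : {mpoly int[n]})) = 1.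
  rewrite rmorph_prod /= (eq_bigr (fun _ => 1)) ?prodr_const ?expr1n //.
  by move=> k _; rewrite mevalXU.
under eq_bigr => h _ do rewrite eval1.
rewrite sumr_const => /eqP; rewrite pnatr_eq0 => /eqP /card0_eq.
move=> /(_ [set k : 'I_n | (k < m)%N]); rewrite unfold_in /= card_ord_lt.
rewrite (minn_idPl (leq_trans mL Ln)) eqxx /=.
suff -> : [forall k in [set k : 'I_n | (k < m)%N], (k < L)%N] by [].
by apply/forall_inP => k; rewrite inE => /leq_trans; apply.
Qed.

Lemma elem_sym_full L : (L <= n)%N ->
  elem_sym n L L = \prod_(k : 'I_n | (k < L)%N) 'X_k.
Proof.
move=> Ln; rewrite /elem_sym (big_pred1 [set k : 'I_n | (k < L)%N]) => [|h].
  by apply: eq_bigl => k; rewrite inE.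
rewrite /=; apply/andP/eqP => [[/eqP hL /forall_inP sub]|->].
  apply/eqP; rewrite eqEcard hL card_ord_lt (minn_idPl Ln) leqnn andbT.
  by apply/subsetP => k /sub; rewrite inE.
by rewrite card_ord_lt (minn_idPl Ln); split=> //; apply/forall_inP => k; rewrite inE.
Qed.

Lemma elem_symS (j : 'I_n) m :
  elem_sym n j.+1 m.+1 = elem_sym n j m.+1 + 'X_j * elem_sym n j m.
Proof.
have below_jS (h : {set 'I_n}) : j \notin h ->
    [forall k in h, (k < j.+1)%N] = [forall k in h, (k < j)%N].
  move=> jh; apply/forall_inP/forall_inP => hj k kh; have := hj k kh; last exact: ltnW.
  by rewrite ltnS leq_eqVlt => /orP [/eqP /val_inj ek|//]; move: jh; rewrite -ek kh.
rewrite /elem_sym (bigID (fun h : {set 'I_n} => j \in h)) /= addrC; congr (_ + _).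
  apply: eq_bigl => h; case: (boolP (j \in h)) => jh /=; last by rewrite andbT below_jS.
  by rewrite andbF; symmetry; apply/andP => -[_ /forall_inP /(_ j jh)]; rewrite ltnn.
rewrite mulr_sumr (reindex_onto (fun h => j |: h) (fun h => h :\ j)) /=;
  last by move=> h /andP [_ jh]; rewrite setD1K.
apply: eq_big => h; last by move=> /andP [_ /eqP hj]; rewrite big_setU1 //= -hj setD11.
case: (boolP (j \in h)) => jh.
  rewrite (_ : [forall k in h, (k < j)%N] = false) ?andbF;
    last by apply/negbTE/forall_inP => /(_ j jh); rewrite ltnn.
  by apply/negbTE/negP => /andP [_ /eqP hj]; move: jh; rewrite -hj setD11.
rewrite setU11 andbT setU1K // eqxx andbT cardsU1 jh add1n eqSS -below_jS //.
congr (_ && _); apply/forall_inP/forall_inP => hj k kh; first by apply: hj; rewrite setU1r.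
by move: kh; rewrite in_setU1 => /orP [/eqP -> //|]; apply: hj.
Qed.

Lemma msym_elem_sym (s : 'S_n) L m : (forall k : 'I_n, (s k < L)%N = (k < L)%N) ->
  msym s (elem_sym n L m) = elem_sym n L m.
Proof.
move=> sL; rewrite /elem_sym rmorph_sum /=.
under eq_bigr => h _ do rewrite rmorph_prod /= (eq_bigr _ (fun k _ => msymXU s k))
  -(big_imset (fun k => 'X_k) (in2W (@perm_inj _ s))) /=.
rewrite [RHS](reindex (fun h : {set 'I_n} => s @: h)) /=; last first.
  exists (fun h : {set 'I_n} => s^-1%g @: h) => h _; rewrite -imset_comp -[RHS]imset_id;
  by apply: eq_imset => k /=; rewrite ?permK ?permKV.
apply: eq_bigl => h; rewrite card_imset; last exact: perm_inj.
congr (_ && _); apply/forall_inP/forall_inP => hL k.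
  by move=> /imsetP [k' k'h ->]; rewrite sL; apply: hL.
by move=> kh; rewrite -sL; apply/hL/imset_f.
Qed.

Lemma msym_simple_tr_elem_sym j (hj : (j.+1 < n)%N) L m : L != j.+1 ->
  msym (simple_tr hj) (elem_sym n L m) = elem_sym n L m.
Proof. by move=> /eqP Lj; apply: msym_elem_sym => k; rewrite simple_trE; case: swapnP; lia. Qed.

End ElemSym.

Definition upd (a : nat -> nat) (k v : nat) : nat -> nat :=
  fun p => if p == k then v else a p.

Lemma upd_same a k v : upd a k v k = v.
Proof. by rewrite /upd eqxx. Qed.

Lemma upd_other a k v p : p != k -> upd a k v p = a p.
Proof. by rewrite /upd => /negbTE ->. Qed.

Section ElemMonomial.
Variable n : nat.
Local Open Scope ring_scope.
Implicit Types (a b : nat -> nat) (j k m : nat).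

Definition elem_monomial a : {mpoly int[n]} := \prod_(k < n) elem_sym n k.+1 (a k).

Lemma eq_elem_monomial a b : (forall k, (k < n)%N -> a k = b k) ->
  elem_monomial a = elem_monomial b.
Proof. by move=> ab; apply: eq_bigr => k _; rewrite ab. Qed.

Lemma elem_monomialD1 a k : (k < n)%N ->
  elem_monomial a = elem_sym n k.+1 (a k) * elem_monomial (upd a k 0).
Proof.
move=> hk; rewrite /elem_monomial (bigD1 (Ordinal hk)) // [in RHS](bigD1 (Ordinal hk)) //=.
rewrite upd_same elem_sym0 mul1r; congr (_ * _).
by apply: eq_bigr => i; rewrite -val_eqE => /upd_other ->.
Qed.

Lemma mul_elem_monomial a k m : (k < n)%N -> a k = 0%N ->
  elem_sym n k.+1 m * elem_monomial a = elem_monomial (upd a k m).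
Proof.
move=> hk ak; rewrite [RHS](elem_monomialD1 _ hk) upd_same; congr (_ * _).
by apply: eq_elem_monomial => p _; rewrite /upd; case: eqP => // ->.
Qed.

Lemma elem_monomial_eq0 a k : (k < n)%N -> (k.+1 < a k)%N -> elem_monomial a = 0.
Proof. by move=> hk ak; rewrite (elem_monomialD1 _ hk) elem_sym_eq0 ?mul0r. Qed.

Lemma elem_monomial_neq0_le a k : elem_monomial a != 0 -> (k < n)%N -> (a k <= k.+1)%N.
Proof. by move=> nz hk; rewrite leqNgt; apply: contra nz => /(elem_monomial_eq0 hk) ->. Qed.

Lemma msym_elem_monomial a j (hj : (j.+1 < n)%N) : a j = 0%N ->
  msym (simple_tr hj) (elem_monomial a) = elem_monomial a.
Proof.
move=> aj; rewrite rmorph_prod; apply: eq_bigr => k _.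
have [kj|/eqP kj] := eqVneq (k : nat) j; first by rewrite kj aj elem_sym0 rmorph1.
by apply: msym_simple_tr_elem_sym; rewrite eqSS; apply/eqP.
Qed.

Lemma elem_monomial_divdiff a j (hj : (j.+1 < n)%N) m : a j = m.+1 ->
  elem_monomial a - msym (simple_tr hj) (elem_monomial a) =
  ('X_(Ordinal (ltnW hj)) - 'X_(Ordinal hj)) * (elem_sym n j m * elem_monomial (upd a j 0)).
Proof.
move=> aj; rewrite (elem_monomialD1 _ (ltnW hj)) msymM msym_elem_monomial; last exact: upd_same.
rewrite aj (elem_symS (Ordinal (ltnW hj))) /= msymD msymM.
rewrite !msym_simple_tr_elem_sym ?(ltn_eqF (ltnSn _)) // msymXU /simple_tr tpermL; ring.
Qed.

Lemma stair_monoE :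
  stair_mono n = elem_monomial (fun k => if (k.+1 < n)%N then k.+1 else 0%N).
Proof.
have col (k : 'I_n) : elem_sym n k.+1 (if (k.+1 < n)%N then k.+1 else 0%N) =
    \prod_(x < n) (if (x < k.+1 < n)%N then 'X_x else 1).
  case: ifP => kn; last by rewrite elem_sym0 big1 // => x _; rewrite andbF.
  by rewrite elem_sym_full ?(ltnW kn) // big_mkcond; apply: eq_bigr => x _; rewrite ?kn andbT.
rewrite /elem_monomial (eq_bigr _ (fun (k : 'I_n) _ => col k)) exchange_big /=.
apply: eq_bigr => x _; rewrite -big_mkcond prodr_const -(card_ord_range x (leq_pred n)).
by congr (_ ^+ _); apply: eq_card => k; rewrite !inE; lia.
Qed.

End ElemMonomial.

Section Schubert.
Variables (n : nat) (S : 'S_n -> {mpoly int[n]}).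
Hypothesis HS : is_schubert_family S.
Local Notation E := (elem_monomial n).
Local Notation xdiff hj := ('X_(Ordinal (ltnW hj)) - 'X_(Ordinal hj) : {mpoly int[n]})%R.
Implicit Types (w u : 'S_n) (a : nat -> nat) (i j : nat).

Lemma xdiff_neq0 j (hj : j.+1 < n) : xdiff hj != 0%R.
Proof. by apply: subX_neq0; rewrite -val_eqE /= (ltn_eqF (ltnSn j)). Qed.

Lemma schubert_descent w j (hj : j.+1 < n) : descent w j ->
  (xdiff hj * S (mul_s w hj) = S w - msym (simple_tr hj) (S w))%R.
Proof. by move=> dj; have := HS.2 w j hj; rewrite (perm_length_descent hj dj) eqxx. Qed.

Lemma schubert_ascent w j (hj : j.+1 < n) : permn w j < permn w j.+1 ->
  msym (simple_tr hj) (S w) = S w.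
Proof.
move=> aj; have := HS.2 w j hj; rewrite (perm_length_ascent hj aj) ifN ?mulr0; last by lia.
by move/eqP; rewrite eq_sym subr_eq0 => /eqP.
Qed.

Lemma schubert1_eq0 w : S w = 0%R -> S 1%g = 0%R.
Proof.
move: {2}(perm_length w) (erefl (perm_length w)) => l.
elim/ltn_ind: l w => l IH w lw Sw.
have [<-//|[j dj]] := perm_eq1_or_descent w.
have hj := descent_lt dj.
apply: (IH _ _ (mul_s w hj) erefl); first by rewrite -lw -(perm_length_descent hj dj).
have := schubert_descent hj dj; rewrite Sw msym0 subr0 => /eqP.
by rewrite mulf_eq0 (negbTE (xdiff_neq0 hj)) => /eqP.
Qed.

Lemma schubert_elem_monomial_step w a j (hj : j.+1 < n) m :
  S w = E a -> descent w j -> a j = m.+1 ->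
  S (mul_s w hj) = (elem_sym n j m * E (upd a j 0))%R.
Proof.
move=> Sw dj aj; apply: (mulfI (xdiff_neq0 hj)).
by rewrite schubert_descent // Sw (elem_monomial_divdiff _ aj).
Qed.

Lemma schubert_rotate j (hj : j.+1 < n) u a : S u = E a -> a j = j.+1 ->
  (forall p, p < j -> a p = 0) ->
  (forall p, p <= j -> permn u j.+1 < permn u p) ->
  exists2 u', S u' = E (upd a j 0) & forall p, permn u' p = permn u (cycn j p).
Proof.
elim: j hj u a => [|j IH] hj u a Su aj a_lt u_min.
  exists (mul_s u hj); last by move=> p; rewrite permn_mul_s cycn0.
  by rewrite (schubert_elem_monomial_step hj Su (u_min 0 (leqnn 0)) aj) elem_sym0 mul1r.
have Su1 := schubert_elem_monomial_step hj Su (u_min _ (leqnn _)) aj.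
rewrite mul_elem_monomial ?upd_other ?a_lt ?(ltn_eqF (ltnSn j)) // in Su1; last by lia.
have a1_lt p : p < j -> upd (upd a j.+1 0) j j.+1 p = 0.
  by move=> pj; rewrite !upd_other ?a_lt //; apply/eqP; lia.
have u1_min p : p <= j -> permn (mul_s u hj) j.+1 < permn (mul_s u hj) p.
  by move=> pj; rewrite !permn_mul_s swapn_first swapn_id; try lia; apply: u_min; lia.
have [u' Su' hu'] := IH (ltnW hj) _ _ Su1 (upd_same _ _ _) a1_lt u1_min.
exists u'; last by move=> p; rewrite hu' permn_mul_s swapn_cycn.
rewrite Su'; apply: eq_elem_monomial => p _; rewrite /upd.
by case: (p =P j) => [->|//]; rewrite (ltn_eqF (ltnSn j)) a_lt.
Qed.

(* Round k of the descent from S_{w0} to S_1 removes e^{k+1}_{k+1} by the moves at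
   k, k-1, ..., 0. *)
Lemma schubert_stage k : k < n ->
  exists u, [/\ S u = E (fun p => if (k <= p) && (p.+1 < n) then p.+1 else 0),
    forall p, p <= k -> permn u p = n.-1 - k + p &
    forall p, k < p < n -> permn u p = n.-1 - p].
Proof.
elim: k => [n_gt0|k IH hk].
  exists (w0 n); split; first by rewrite HS.1 stair_monoE.
    by move=> p; rewrite leqn0 => /eqP ->; rewrite (permnE _ n_gt0) /w0 permE /=; lia.
  by move=> p /andP [_ hp]; rewrite (permnE _ hp) /w0 permE /=; lia.
have [u [Su hu_le hu_gt]] := IH (ltnW hk).
set a := fun p => _ in Su.
have ak : a k = k.+1 by rewrite /a leqnn hk.
have a_lt p : p < k -> a p = 0 by move=> pk; rewrite /a leqNgt pk.
have u_min p : p <= k -> permn u k.+1 < permn u p.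
  by move=> pk; rewrite (hu_le p pk) hu_gt ?ltnSn ?hk //; lia.
have [u' Su' hu'] := schubert_rotate hk Su ak a_lt u_min.
exists u'; split.
- rewrite Su'; apply: eq_elem_monomial => p _; rewrite /upd /a [(k < p)]ltn_neqAle.
  by case: (p =P k) => [->|/eqP pk]; [rewrite eqxx | rewrite eq_sym pk].
- move=> p pk; rewrite hu'; case: cycnP => [p0|p0|]; last by lia.
    by rewrite hu_gt; lia.
  by rewrite hu_le; lia.
- move=> p pk; rewrite hu'; case: cycnP; try lia.
  by move=> _; rewrite hu_gt; lia.
Qed.

Lemma schubert1 : S 1%g = 1%R.
Proof.
have [n0|n_gt0] := posnP n.
  have ord0 (x : 'I_n) : False by move: (ltn_ord x); rewrite [X in (_ < X)]n0.
  have -> : 1%g = w0 n by apply/permP => x; case: (ord0 x).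
  by rewrite HS.1 /stair_mono big1 // => x; case: (ord0 x).
have hn : n.-1 < n by lia.
have [u [Su hu _]] := schubert_stage hn.
have -> : 1%g = u.
  apply/permP => x; apply/eqP; rewrite perm1 -val_eqE /= -permn_ord hu ?subnn //.
  by have := ltn_ord x; lia.
rewrite Su /elem_monomial big1 // => k _; rewrite ifF ?elem_sym0 //; apply/negbTE; lia.
Qed.

Lemma schubert_neq0 w : S w != 0%R.
Proof. by apply/eqP => /schubert1_eq0; rewrite schubert1 => /eqP; rewrite oner_eq0. Qed.

Lemma schubert_elem_monomial_le w a k : S w = E a -> k < n -> a k <= k.+1.
Proof. by move=> Sw; apply: elem_monomial_neq0_le; rewrite -Sw schubert_neq0. Qed.

Lemma schubert_elem_monomial_ascent w a j : S w = E a -> j.+1 < n ->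
  permn w j < permn w j.+1 -> a j = 0.
Proof.
move=> Sw hj aj; case ej: (a j) => [//|m]; exfalso.
have := schubert_neq0 w; rewrite Sw (elem_monomialD1 _ (ltnW hj)) mulf_eq0 negb_or.
case/andP=> _ /negbTE Ea_neq0.
have := schubert_ascent hj aj; rewrite Sw => /eqP; rewrite eq_sym -subr_eq0.
rewrite (elem_monomial_divdiff _ ej) !mulf_eq0 (negbTE (xdiff_neq0 hj)) Ea_neq0 orbF /=.
rewrite (negbTE (elem_sym_neq0 _ _)) ?(ltnW (ltnW hj)) //.
by have := schubert_elem_monomial_le Sw (ltnW hj); rewrite ej.
Qed.

Lemma schubert_elem_monomial_descent w a j : S w = E a -> descent w j -> 0 < a j.
Proof.
move=> Sw dj; have hj := descent_lt dj; rewrite lt0n; apply/eqP => aj.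
have := schubert_descent hj dj; rewrite Sw msym_elem_monomial // subrr => /eqP.
by rewrite mulf_eq0 (negbTE (xdiff_neq0 hj)) (negbTE (schubert_neq0 _)).
Qed.

Lemma schubert_elem_monomial_move w a j (hj : j.+1 < n) : S w = E a -> descent w j ->
  (0 < j -> ~~ descent w j.-1) ->
  exists2 a', S (mul_s w hj) = E a' & forall k, j < k -> a' k = a k.
Proof.
move=> Sw dj no_dj'; have := schubert_elem_monomial_descent Sw dj.
case ej: (a j) => [//|m] _; rewrite (schubert_elem_monomial_step hj Sw dj ej).
case: j hj dj no_dj' ej => [|j] hj dj no_dj' ej.
  have m0 : m = 0 by have := schubert_elem_monomial_le Sw (ltnW hj); rewrite ej; lia.
  exists (upd a 0 0); first by rewrite m0 elem_sym0 mul1r.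
  by move=> k k0; rewrite upd_other // -lt0n.
have aj : a j = 0.
  exact: schubert_elem_monomial_ascent Sw (ltnW hj) (descentN_lt (ltnW hj) (no_dj' isT)).
exists (upd (upd a j.+1 0) j m).
  by rewrite mul_elem_monomial ?upd_other ?(ltn_eqF (ltnSn j)) //; lia.
by move=> k jk; rewrite !upd_other //; apply/eqP; lia.
Qed.

Lemma schubert_elem_monomial_no312 w a i : S w = E a -> (0 < i -> ~~ descent w i.-1) -> i.+2 < n ->
  permn w i.+1 < permn w i.+2 < permn w i -> False.
Proof.
move=> Sw no_di' hi2 /andP [w12 w20]; have hi := ltnW hi2.
have di : descent w i by rewrite /descent; lia.
have [a' Sw' a'_gt] := schubert_elem_monomial_move hi Sw di no_di'.
have di1 : descent (mul_s w hi) i.+1.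
  by rewrite /descent !permn_mul_s swapn_second swapn_id //; lia.
have := schubert_elem_monomial_descent Sw' di1.
by rewrite a'_gt // (schubert_elem_monomial_ascent Sw hi2 w12).
Qed.

Lemma schubert_pattern312_reduce w a i : S w = E a -> pattern312 w i ->
  exists j (hj : j.+1 < n), [/\ descent w j, 0 < j -> ~~ descent w j.-1 &
    exists i', pattern312 (mul_s w hj) i'].
Proof.
move=> Sw pw; have [l il /andP [wl1 wl2]] := pw.
have ln : l < n by rewrite -(permn_lt w); have := permn_le w i; lia.
have di : descent w i by rewrite /descent; lia.
case: (ex_minnP (ex_intro _ i di)) => j dj min_j; have hj := descent_lt dj.
have no_dj' : 0 < j -> ~~ descent w j.-1 by move=> j_gt0; apply/negP => /min_j; lia.
have [ji|ij] := ltnP j i.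
  by exists j, hj; split=> //; exists i; apply: pattern312_mul_lt.
have ej : j = i by have := min_j _ di; lia.
subst j; have i2n : i.+2 < n by lia.
have [di1|ai1] := boolP (descent w i.+1).
  by exists i, hj; split=> //; exists i.+1; apply: pattern312_mul_at.
have w12 := descentN_lt i2n ai1.
have [w20|w02] := ltnP (permn w i.+2) (permn w i).
  by case: (schubert_elem_monomial_no312 Sw no_dj' i2n); rewrite w12.
have [k /andP [i2k kl] dk] := descent_between il ln (leq_trans wl2 w02).
case: (ex_minnP (P := fun k => (i.+2 <= k) && descent w k) _); first by exists k; rewrite i2k.
move=> k1 /andP [i2k1 dk1] min_k1; have hk1 := descent_lt dk1.
exists k1, hk1; split=> //; last by exists i; apply: pattern312_mul_ge.
move=> _; have [ek1|] := eqVneq k1 i.+2; first by rewrite ek1.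
by move=> ? ; apply/negP => dk1'; have := min_k1 k1.-1; rewrite dk1' andbT; lia.
Qed.

Lemma schubert_pattern312_neq w i : pattern312 w i -> forall a, S w != E a.
Proof.
move: {2}(perm_length w) (erefl (perm_length w)) => l.
elim/ltn_ind: l w i => l IH w i lw pw a; apply/eqP => Sw.
have [j [hj [dj no_dj' [i' pw']]]] := schubert_pattern312_reduce Sw pw.
have [a' Sw' _] := schubert_elem_monomial_move hj Sw dj no_dj'.
have lt_l : perm_length (mul_s w hj) < l by rewrite -lw -(perm_length_descent hj dj).
by move/eqP: Sw'; apply/negP/(IH _ lt_l _ _ erefl pw').
Qed.

End Schubert.

Theorem lemma14 (n : nat) (S : 'S_n -> {mpoly int[n]})
  (HS : is_schubert_family S) (w : 'S_n) (i : nat) (hi : (i.+1 < n)%N) :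
  (lehmer w (Ordinal hi) + 2 <= lehmer w (Ordinal (ltnW hi)))%N ->
  ~ is_std_elem_monomial (S w).
Proof.
move=> hL [a Sw].
have /eqP := schubert_pattern312_neq HS (lehmer_pattern312 hL) (fun k => oapp a 0 (insub k)).
by apply; rewrite Sw; apply: eq_bigr => k _; rewrite /= valK.
Qed.
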